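(* Let $\theta\in(0,\frac{\pi}{2})$ and let $\Sigma^{\tan\theta}\subset\mathbb{R}^4$ be the minimal surface given by the conformal harmonic map \[ \mathbf{X}^{\tan\theta}(U,V)=\Big(\frac{\sin\theta}{\cos\theta}\sinh U\cos V,\ \cosh U\cos V,\ \frac{1}{\cos\theta}\cosh U\sin V,\ U\Big),\qquad (U,V)\in\mathbb{R}^2, \] with coordinates $(\mathbf{x}_1,\mathbf{x}_2,\mathbf{x}_3,\mathbf{x}_4)$ on $\mathbb{R}^4$. Then: (1) For each constant $U_0\in\mathbb{R}$, the level set $\mathcal{C}_{U_0}=\Sigma^{\tan\theta}\cap\{\mathbf{x}_4=U_0\}$ is an ellipse; in particular the neck $\mathcal{C}_0=\Sigma^{\tan\theta}\cap\{\mathbf{x}_4=0\}$ is congruent to the ellipse $\mathbf{x}^2+(\cos^2\theta)\,\mathbf{y}^2=1$. (2) As $U\to\infty$ (or $U\to-\infty$), the ellipse $\mathcal{C}_U$ converges to a circle, in the sense that the ratio of the lengths of its two semi-axes tends to $1$. *)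

From Stdlib Require Import Reals.
From Coquelicot Require Import Coquelicot.
Open Scope R_scope.

Record R4 := mkR4 { x1 : R; x2 : R; x3 : R; x4 : R }.

Definition add4 (p q : R4) : R4 :=
  mkR4 (x1 p + x1 q) (x2 p + x2 q) (x3 p + x3 q) (x4 p + x4 q).
Definition scal4 (a : R) (p : R4) : R4 :=
  mkR4 (a * x1 p) (a * x2 p) (a * x3 p) (a * x4 p).
Definition dot4 (p q : R4) : R :=
  x1 p * x1 q + x2 p * x2 q + x3 p * x3 q + x4 p * x4 q.

Definition orthonormal2 (e1 e2 : R4) : Prop :=
  dot4 e1 e1 = 1 /\ dot4 e2 e2 = 1 /\ dot4 e1 e2 = 0.

Definition Xmap (theta U V : R) : R4 :=
  mkR4 (sin theta / cos theta * sinh U * cos V)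
       (cosh U * cos V)
       (1 / cos theta * cosh U * sin V)
       U.

Definition Sigma (theta : R) (p : R4) : Prop :=
  exists U V : R, p = Xmap theta U V.

Definition level_set (theta U0 : R) (p : R4) : Prop :=
  Sigma theta p /\ x4 p = U0.

Definition is_ellipse_axes (E : R4 -> Prop) (a b : R) : Prop :=
  0 < a /\ 0 < b /\
  exists c e1 e2 : R4, orthonormal2 e1 e2 /\
    forall p, E p <-> exists t : R,
      p = add4 c (add4 (scal4 (a * cos t) e1) (scal4 (b * sin t) e2)).

Definition is_ellipse (E : R4 -> Prop) : Prop :=
  exists a b : R, is_ellipse_axes E a b.

(* E is congruent to the planar curve {(x,y) : P x y}: it is its image under an
   isometric (affine) embedding (x,y) |-> c + x e1 + y e2 of R^2 into R^4. *)
Definition congruent_to_planar (E : R4 -> Prop) (P : R -> R -> Prop) : Prop :=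
  exists c e1 e2 : R4, orthonormal2 e1 e2 /\
    forall p, E p <-> exists x y : R, P x y /\
      p = add4 c (add4 (scal4 x e1) (scal4 y e2)).

From Stdlib Require Import Reals Lra.
From Coquelicot Require Import Coquelicot.
Open Scope R_scope.

(* At height U the level curve is V |-> (0,0,0,U) + cos V u + sin V v with
   u = (tan θ sinh U, cosh U, 0, 0) and v = (0, 0, cosh U / cos θ, 0).  These
   vectors are orthogonal, so the curve is an ellipse with semi-axes |u| and |v|;
   at U = 0 they are 1 and 1 / cos θ.  Since cosh^2 - sinh^2 = 1, the axis ratio
   is |u| / |v| = sqrt (1 - (sin θ / cosh U)^2), which tends to 1 as |U| -> oo. *)

Definition norm4 (p : R4) : R := sqrt (dot4 p p).

Lemma norm4_sq (p : R4) : norm4 p ^ 2 = dot4 p p.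
Proof.
  assert (Hdot : 0 <= dot4 p p).
  { destruct p as [a b c d]; unfold dot4; simpl; nra. }
  unfold norm4; rewrite pow2_sqrt; auto.
Qed.

Lemma norm4_gt0 (p : R4) : 0 < dot4 p p -> 0 < norm4 p.
Proof. intros Hp; apply sqrt_lt_R0, Hp. Qed.

Lemma scal4_scal4 (a b : R) (p : R4) : scal4 a (scal4 b p) = scal4 (a * b) p.
Proof. destruct p; unfold scal4; simpl; f_equal; ring. Qed.

Lemma scal4_mul_inv (n a : R) (p : R4) :
  n <> 0 -> scal4 (n * a) (scal4 (/ n) p) = scal4 a p.
Proof. intros Hn; rewrite scal4_scal4; f_equal; field; exact Hn. Qed.

Lemma dot4_scal4 (a b : R) (p q : R4) :
  dot4 (scal4 a p) (scal4 b q) = a * b * dot4 p q.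
Proof. destruct p, q; unfold dot4, scal4; simpl; ring. Qed.

Lemma dot4_normalize (p : R4) :
  0 < dot4 p p -> dot4 (scal4 (/ norm4 p) p) (scal4 (/ norm4 p) p) = 1.
Proof.
  intros Hp; pose proof (norm4_gt0 p Hp) as Hn.
  rewrite dot4_scal4, <- norm4_sq; field; lra.
Qed.

Lemma ellipse_of_orthogonal (c u v : R4) :
  0 < dot4 u u -> 0 < dot4 v v -> dot4 u v = 0 ->
  is_ellipse_axes
    (fun p => exists t, p = add4 c (add4 (scal4 (cos t) u) (scal4 (sin t) v)))
    (norm4 u) (norm4 v).
Proof.
  intros Hu Hv Huv.
  pose proof (norm4_gt0 u Hu) as Hnu; pose proof (norm4_gt0 v Hv) as Hnv.
  split; [exact Hnu | split; [exact Hnv |]].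
  exists c, (scal4 (/ norm4 u) u), (scal4 (/ norm4 v) v); split.
  - split; [now apply dot4_normalize | split; [now apply dot4_normalize |]].
    rewrite dot4_scal4, Huv; ring.
  - intros p; split; intros [t ->]; exists t; rewrite !scal4_mul_inv by lra; reflexivity.
Qed.

Lemma is_ellipse_axes_ext (E F : R4 -> Prop) (a b : R) :
  (forall p, E p <-> F p) -> is_ellipse_axes E a b -> is_ellipse_axes F a b.
Proof.
  intros HEF [Ha [Hb [c [e1 [e2 [He HE]]]]]].
  split; [exact Ha | split; [exact Hb |]].
  exists c, e1, e2; split; [exact He |].
  intros p; rewrite <- HEF; apply HE.
Qed.

Lemma congruent_to_planar_ext (E : R4 -> Prop) (P Q : R -> R -> Prop) :
  (forall x y, P x y <-> Q x y) -> congruent_to_planar E P -> congruent_to_planar E Q.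
Proof.
  intros HPQ [c [e1 [e2 [He HE]]]].
  exists c, e1, e2; split; [exact He |].
  intros p; rewrite HE; split; intros [x [y [Hxy Hp]]]; exists x, y;
    split; auto; apply HPQ; exact Hxy.
Qed.

Lemma unit_circle_angle (x y : R) :
  x ^ 2 + y ^ 2 = 1 -> exists t, cos t = x /\ sin t = y.
Proof.
  intros Hxy.
  assert (Hx : -1 <= x <= 1) by (split; nra).
  assert (Hsin : sqrt (1 - x²) = Rabs y).
  { rewrite <- sqrt_Rsqr_abs; f_equal; unfold Rsqr; lra. }
  destruct (Rle_dec 0 y) as [Hy | Hy].
  - exists (acos x); rewrite cos_acos, sin_acos, Hsin, Rabs_pos_eq by lra; auto.
  - exists (- acos x); rewrite cos_neg, sin_neg, cos_acos, sin_acos, Hsin, Rabs_left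
      by lra; split; [reflexivity | ring].
Qed.

Lemma congruent_ellipse_axes (E : R4 -> Prop) (a b : R) :
  is_ellipse_axes E a b ->
  congruent_to_planar E (fun x y => (x / a) ^ 2 + (y / b) ^ 2 = 1).
Proof.
  intros [Ha [Hb [c [e1 [e2 [He HE]]]]]].
  exists c, e1, e2; split; [exact He |].
  intros p; rewrite HE; split.
  - intros [t ->]; exists (a * cos t), (b * sin t); split; [| reflexivity].
    rewrite <- (sin2_cos2 t); unfold Rsqr; field; lra.
  - intros [x [y [Hxy ->]]].
    destruct (unit_circle_angle (x / a) (y / b)) as [t [Hcos Hsin]]; [exact Hxy |].
    exists t; rewrite Hcos, Hsin; do 3 f_equal; field; lra.
Qed.

Lemma cosh_gt0 (U : R) : 0 < cosh U.
Proof. unfold cosh; pose proof (exp_pos U); pose proof (exp_pos (- U)); lra. Qed.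

Lemma cosh_opp (U : R) : cosh (- U) = cosh U.
Proof. unfold cosh; rewrite Ropp_involutive; lra. Qed.

Lemma cosh_sq_sub_sinh_sq (U : R) : cosh U ^ 2 - sinh U ^ 2 = 1.
Proof.
  unfold cosh, sinh; rewrite exp_Ropp; pose proof (exp_pos U); field; lra.
Qed.

Lemma level_set_Xmap (theta U0 : R) (p : R4) :
  level_set theta U0 p <-> exists V, p = Xmap theta U0 V.
Proof.
  split.
  - intros [[U [V ->]] HU]; simpl in HU; subst; eauto.
  - intros [V ->]; split; [exists U0, V |]; reflexivity.
Qed.

Definition level_center (U : R) : R4 := mkR4 0 0 0 U.
Definition level_axis1 (theta U : R) : R4 :=
  mkR4 (sin theta / cos theta * sinh U) (cosh U) 0 0.
Definition level_axis2 (theta U : R) : R4 := mkR4 0 0 (cosh U / cos theta) 0.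

Lemma Xmap_level_param (theta U V : R) :
  Xmap theta U V =
  add4 (level_center U)
    (add4 (scal4 (cos V) (level_axis1 theta U)) (scal4 (sin V) (level_axis2 theta U))).
Proof. unfold Xmap, add4, scal4; simpl; f_equal; unfold Rdiv; ring. Qed.

Section LevelSets.

Variable theta : R.
Hypothesis cos_neq0 : cos theta <> 0.

Lemma dot4_level_axis1_gt0 (U : R) :
  0 < dot4 (level_axis1 theta U) (level_axis1 theta U).
Proof. pose proof (cosh_gt0 U); unfold dot4; simpl; nra. Qed.

Lemma dot4_level_axis2_gt0 (U : R) :
  0 < dot4 (level_axis2 theta U) (level_axis2 theta U).
Proof.
  assert (Hv : cosh U / cos theta <> 0).
  { pose proof (cosh_gt0 U); unfold Rdiv;
      apply Rmult_integral_contrapositive_currified; [lra | now apply Rinv_neq_0_compat]. }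
  pose proof (Rsqr_pos_lt _ Hv); unfold dot4, Rsqr in *; simpl; lra.
Qed.

Lemma level_set_ellipse (U : R) :
  is_ellipse_axes (level_set theta U)
    (norm4 (level_axis1 theta U)) (norm4 (level_axis2 theta U)).
Proof.
  apply (is_ellipse_axes_ext
    (fun p => exists t, p = add4 (level_center U)
       (add4 (scal4 (cos t) (level_axis1 theta U)) (scal4 (sin t) (level_axis2 theta U))))).
  - intros p; rewrite level_set_Xmap.
    split; intros [V ->]; exists V; rewrite Xmap_level_param; reflexivity.
  - apply ellipse_of_orthogonal;
      [apply dot4_level_axis1_gt0 | apply dot4_level_axis2_gt0 | unfold dot4; simpl; ring].
Qed.

Lemma level_axes_ratio (U : R) :
  norm4 (level_axis1 theta U) / norm4 (level_axis2 theta U) =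
  sqrt (1 - (sin theta / cosh U) ^ 2).
Proof.
  pose proof (cosh_gt0 U) as Hch.
  assert (Hsh : sinh U ^ 2 = cosh U ^ 2 - 1)
    by (pose proof (cosh_sq_sub_sinh_sq U); lra).
  assert (Hs : sin theta ^ 2 = 1 - cos theta ^ 2)
    by (pose proof (sin2_cos2 theta); unfold Rsqr in *; lra).
  unfold norm4; rewrite <- sqrt_div_alt.
  - f_equal; unfold dot4, level_axis1, level_axis2; cbn [x1 x2 x3 x4].
    transitivity ((sin theta ^ 2 * sinh U ^ 2 + cos theta ^ 2 * cosh U ^ 2)
                  / cosh U ^ 2); [field; lra |].
    replace ((sin theta / cosh U) ^ 2) with (sin theta ^ 2 / cosh U ^ 2) by (field; lra).
    rewrite Hsh, Hs; field; lra.
  - apply dot4_level_axis2_gt0.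
Qed.

Lemma neck_congruent :
  congruent_to_planar (level_set theta 0)
    (fun x y => x ^ 2 + (cos theta) ^ 2 * y ^ 2 = 1).
Proof.
  apply (congruent_to_planar_ext _
    (fun x y => (x / norm4 (level_axis1 theta 0)) ^ 2
              + (y / norm4 (level_axis2 theta 0)) ^ 2 = 1));
    [| apply congruent_ellipse_axes, level_set_ellipse].
  intros x y.
  pose proof (norm4_gt0 _ (dot4_level_axis1_gt0 0)) as Hn1.
  pose proof (norm4_gt0 _ (dot4_level_axis2_gt0 0)) as Hn2.
  assert (Hsq1 : norm4 (level_axis1 theta 0) ^ 2 = 1).
  { rewrite norm4_sq; unfold dot4, level_axis1; cbn [x1 x2 x3 x4].
    rewrite sinh_0, cosh_0; ring. }
  assert (Hsq2 : norm4 (level_axis2 theta 0) ^ 2 = / cos theta ^ 2).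
  { rewrite norm4_sq; unfold dot4, level_axis2; cbn [x1 x2 x3 x4].
    rewrite cosh_0; field; exact cos_neq0. }
  replace ((x / norm4 (level_axis1 theta 0)) ^ 2 + (y / norm4 (level_axis2 theta 0)) ^ 2)
    with (x ^ 2 / norm4 (level_axis1 theta 0) ^ 2 + y ^ 2 / norm4 (level_axis2 theta 0) ^ 2)
    by (field; lra).
  rewrite Hsq1, Hsq2.
  replace (x ^ 2 / 1 + y ^ 2 / / cos theta ^ 2) with (x ^ 2 + cos theta ^ 2 * y ^ 2)
    by (field; exact cos_neq0).
  reflexivity.
Qed.

End LevelSets.

Lemma is_lim_inv_cosh_p : is_lim (fun U => / cosh U) p_infty 0.
Proof.
  apply (is_lim_ext (fun U => 2 * / (exp U + exp (- U)))).
  { intros U; unfold cosh; pose proof (exp_pos U); pose proof (exp_pos (- U)).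
    field; lra. }
  replace (Finite 0) with (Rbar_mult 2 (Rbar_inv p_infty))
    by (simpl; f_equal; apply Rmult_0_r).
  apply is_lim_scal_l, is_lim_inv; [| discriminate].
  apply (is_lim_le_p_loc exp); [| exact is_lim_exp_p].
  exists 0; intros U _; pose proof (exp_pos (- U)); lra.
Qed.

Lemma is_lim_m_infty_of_even (f : R -> R) (l : Rbar) :
  (forall U, f (- U) = f U) -> is_lim f p_infty l -> is_lim f m_infty l.
Proof.
  intros Heven Hf.
  apply (is_lim_ext (fun U => f (- U))); [exact Heven |].
  apply (is_lim_comp f Ropp m_infty l p_infty Hf).
  - apply (is_lim_opp (fun U => U) m_infty m_infty), is_lim_id.
  - exists 0; intros U _; discriminate.
Qed.

Lemma is_lim_sqrt_one_sub_sq_div_cosh (k : R) :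
  is_lim (fun U => sqrt (1 - (k / cosh U) ^ 2)) p_infty 1.
Proof.
  set (g y := sqrt (1 - (k * y) ^ 2)).
  replace (Finite 1) with (Finite (g 0))
    by (unfold g; rewrite Rmult_0_r, pow_i, Rminus_0_r, sqrt_1 by auto; reflexivity).
  apply (is_lim_comp_continuous (fun U => / cosh U) g); [exact is_lim_inv_cosh_p |].
  apply (@ex_derive_continuous R_AbsRing R_NormedModule); unfold g.
  auto_derive; nra.
Qed.

Theorem theorem6p3 (theta : R) (Htheta : 0 < theta < PI / 2) :
  (forall U0 : R, is_ellipse (level_set theta U0)) /\
  congruent_to_planar (level_set theta 0)
    (fun x y => x ^ 2 + (cos theta) ^ 2 * y ^ 2 = 1) /\
  (exists a b : R -> R,
     (forall U : R, is_ellipse_axes (level_set theta U) (a U) (b U)) /\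
     is_lim (fun U => a U / b U) p_infty 1 /\
     is_lim (fun U => a U / b U) m_infty 1).
Proof.
  assert (Hcos : cos theta <> 0) by (apply Rgt_not_eq, cos_gt_0; lra).
  assert (Hratio : is_lim (fun U => norm4 (level_axis1 theta U)
                                    / norm4 (level_axis2 theta U)) p_infty 1).
  { apply (is_lim_ext (fun U => sqrt (1 - (sin theta / cosh U) ^ 2))).
    - intros U; symmetry; exact (level_axes_ratio theta Hcos U).
    - apply is_lim_sqrt_one_sub_sq_div_cosh. }
  split; [| split].
  - intros U0; exists (norm4 (level_axis1 theta U0)), (norm4 (level_axis2 theta U0)).
    exact (level_set_ellipse theta Hcos U0).
  - exact (neck_congruent theta Hcos).
  - exists (fun U => norm4 (level_axis1 theta U)), (fun U => norm4 (level_axis2 theta U)).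
    split; [exact (level_set_ellipse theta Hcos) | split; [exact Hratio |]].
    apply is_lim_m_infty_of_even; [| exact Hratio].
    intros U; rewrite !(level_axes_ratio theta Hcos), cosh_opp; reflexivity.
Qed.
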